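(* In the notation below, suppose $0<d_n\le1$ for all $n$ and $d_n\ge C|n|^{-\zeta}$ for all $n\neq0$, for some constants $C>0$ and $\zeta<\tfrac12$. Then for every sufficiently small $C_0>0$ there exists $\gamma'>0$ such that for all integers $s\ge1$, $$A(s):=\Big(\frac{15}{16}+\frac1{16}\sup_{|k|\ge t_sC_0/\|a\|_\infty}|\hat r(k)|^2\Big)^{1/2}\le\exp\!\big(-\gamma'|s|^{-2\zeta}\big),$$ where $t_s=\min(d_{2s-1},d_{2s})$.
   Context: $r:\mathbb R\to[0,\infty)$ is bounded, measurable, compactly supported, with $\int r=1$; $\hat r(k)=\int_{\mathbb R}e^{-2\pi ikx}r(x)\,dx$. $(a_n)_{n\in\mathbb Z}$ is a bounded real sequence with $a_n\ge\delta>0$ and $\|a\|_\infty=\sup_n a_n$. *)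

From Stdlib Require Import Reals Lra Lia ZArith ClassicalEpsilon.
Open Scope R_scope.

(** Henstock–Kurzweil (gauge) integral on a compact interval [a,b].
    For bounded functions on a bounded interval this coincides with the
    Lebesgue integral, and gauge-integrability is equivalent to Lebesgue
    measurability. *)

Fixpoint rsum (f : R -> R) (p t : nat -> R) (n : nat) : R :=
  match n with
  | O => 0
  | S m => rsum f p t m + f (t m) * (p (S m) - p m)
  end.

Definition fine_tagged_partition (a b : R) (delta : R -> R) (n : nat)
  (p t : nat -> R) : Prop :=
  p O = a /\ p n = b /\
  forall i : nat, (i < n)%nat ->
    p i < p (S i) /\ p i <= t i <= p (S i) /\
    t i - delta (t i) < p i /\ p (S i) < t i + delta (t i).

Definition gauge_integral (f : R -> R) (a b I : R) : Prop :=
  forall eps : R, 0 < eps ->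
    exists delta : R -> R, (forall x, 0 < delta x) /\
      forall (n : nat) (p t : nat -> R),
        fine_tagged_partition a b delta n p t ->
        Rabs (rsum f p t n - I) < eps.

Definition Rint_cs (f : R -> R) (I : R) : Prop :=
  exists L : R, 0 <= L /\ (forall x, L < Rabs x -> f x = 0) /\
    gauge_integral f (- L) L I.

Definition Rint (f : R -> R) : R :=
  epsilon (inhabits 0) (fun I => Rint_cs f I).

(* hat r (k) = \int e^{-2 pi i k x} r(x) dx, via real and imaginary parts *)
Definition rhat_re (r : R -> R) (k : R) : R :=
  Rint (fun x => r x * cos (2 * PI * k * x)).
Definition rhat_im (r : R -> R) (k : R) : R :=
  Rint (fun x => - (r x * sin (2 * PI * k * x))).

Definition rhat_abs2 (r : R -> R) (k : R) : R :=
  rhat_re r k ^ 2 + rhat_im r k ^ 2.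

Definition Rsup (E : R -> Prop) : R :=
  epsilon (inhabits 0) (fun m => is_lub E m).

Definition sup_norm (a : Z -> R) : R := Rsup (fun y => exists n : Z, y = a n).

Definition t_s (d : Z -> R) (s : Z) : R :=
  Rmin (d (2 * s - 1)%Z) (d (2 * s)%Z).

Definition A_s (r : R -> R) (a d : Z -> R) (C0 : R) (s : Z) : R :=
  sqrt (15 / 16 + 1 / 16 *
    Rsup (fun y => exists k : R,
            t_s d s * C0 / sup_norm a <= Rabs k /\ y = rhat_abs2 r k)).

(* Let |k| >= T and rho = |rhat(k)|.  For a suitable phase phi,
     1 - rho = \int r(x) (1 - cos (2 pi |k| x - phi)) dx.
   Away from the peaks of the cosine the integrand is at least (1 - cos a) r(x); the peaks
   have width a / (pi |k|) and there are about 2 L |k| + 2 of them on [-L, L], so since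
   r <= B they carry at most a quarter of the mass of r once a is a small multiple of T.
   Hence 1 - rho >= 3/4 (1 - cos a) >= c T^2 and |rhat(k)|^2 <= 1 - c T^2.  The hypothesis
   d_n >= C |n|^(-zeta) gives t_s >= const * s^(-zeta), and sqrt (1 - x/16) <= exp (- x/32)
   turns the bound on the supremum into A(s) <= exp (- gamma' s^(-2 zeta)).
   The integrals are gauge integrals; everything used about them (additivity, the Cauchy
   criterion, integrability of r g for Lipschitz g) rests on Cousin's lemma: every gauge
   admits a fine tagged partition. *)

From Stdlib Require Import Reals Lra Lia ZArith Classical ClassicalEpsilon.
Open Scope R_scope.

(** * Tagged partitions and Riemann sums *)

Section TaggedPartition.

Variables (a b : R) (delta : R -> R) (n : nat) (p t : nat -> R).
Hypothesis Hp : fine_tagged_partition a b delta n p t.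

Lemma ftp_step i : (i < n)%nat -> p i < p (S i).
Proof. intros Hi. apply (proj2 (proj2 Hp) i Hi). Qed.

Lemma ftp_le i j : (i <= j <= n)%nat -> p i <= p j.
Proof.
  intros [Hij Hjn]. induction Hij as [|j Hij IH]; [lra|].
  pose proof (ftp_step j ltac:(lia)). specialize (IH ltac:(lia)). lra.
Qed.

Lemma ftp_tag i : (i < n)%nat -> a <= t i <= b.
Proof.
  intros Hi. pose proof Hp as [H0 [Hn H]].
  pose proof (ftp_le 0 i ltac:(lia)). pose proof (ftp_le (S i) n ltac:(lia)).
  destruct (H i Hi) as [_ [Ht _]]. lra.
Qed.

Lemma ftp_degenerate : a = b -> n = 0%nat.
Proof.
  intros Hab. pose proof Hp as [H0 [Hn _]]. destruct (Nat.eq_dec n 0) as [|Hn0]; [assumption|].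
  pose proof (ftp_step 0 ltac:(lia)). pose proof (ftp_le 1 n ltac:(lia)). lra.
Qed.

End TaggedPartition.

Lemma ftp_removelast a b delta m p t :
  fine_tagged_partition a b delta (S m) p t -> fine_tagged_partition a (p m) delta m p t.
Proof. intros [H0 [_ H]]. split; [exact H0|split; [reflexivity|]]. intros i Hi. apply H. lia. Qed.

Lemma ftp_gauge_le a b delta delta' n p t : (forall x, delta x <= delta' x) ->
  fine_tagged_partition a b delta n p t -> fine_tagged_partition a b delta' n p t.
Proof.
  intros Hd [H0 [Hn H]]. split; [|split]; auto. intros i Hi.
  destruct (H i Hi) as [? [? [? ?]]]. pose proof (Hd (t i)). repeat split; lra.
Qed.

Lemma ftp_nil a delta : fine_tagged_partition a a delta 0 (fun _ => a) (fun _ => a).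
Proof. repeat split; intros; lia. Qed.

Lemma ftp_single x y c delta : x < y -> x <= c <= y -> c - delta c < x -> y < c + delta c ->
  exists p t, fine_tagged_partition x y delta 1 p t /\
    forall f, rsum f p t 1 = f c * (y - x).
Proof.
  intros. exists (fun i => match i with O => x | _ => y end), (fun _ => c).
  split; [|intros; simpl; ring].
  split; [reflexivity|split; [reflexivity|]].
  intros i Hi. replace i with 0%nat by lia. repeat split; lra.
Qed.

Lemma rsum_ext f g p t p' t' n :
  (forall i, (i <= n)%nat -> p i = p' i) -> (forall i, (i < n)%nat -> f (t i) = g (t' i)) ->
  rsum f p t n = rsum g p' t' n.
Proof.
  induction n as [|n IH]; intros Hp Ht; simpl; [reflexivity|].
  rewrite IH, (Hp n), (Hp (S n)), (Ht n) by first [lia | intros; auto]. reflexivity.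
Qed.

Lemma rsum_lin f g al be p t n :
  rsum (fun x => al * f x + be * g x) p t n = al * rsum f p t n + be * rsum g p t n.
Proof. induction n as [|n IH]; simpl; [ring|]. rewrite IH. ring. Qed.

Lemma rsum_scal c f p t n : rsum (fun x => c * f x) p t n = c * rsum f p t n.
Proof. induction n as [|n IH]; simpl; [ring|]. rewrite IH. ring. Qed.

Lemma rsum_const c p t n : rsum (fun _ => c) p t n = c * (p n - p 0%nat).
Proof. induction n as [|n IH]; simpl; [ring|]. rewrite IH. ring. Qed.

Lemma rsum_le f g p t n :
  (forall i, (i < n)%nat -> p i <= p (S i) /\ f (t i) <= g (t i)) ->
  rsum f p t n <= rsum g p t n.
Proof.
  induction n as [|n IH]; intros H; simpl; [lra|].
  destruct (H n ltac:(lia)). specialize (IH ltac:(intros; apply H; lia)). nra.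
Qed.

Lemma ftp_rsum_le a b delta n p t f g : fine_tagged_partition a b delta n p t ->
  (forall x, a <= x <= b -> f x <= g x) -> rsum f p t n <= rsum g p t n.
Proof.
  intros Hp Hfg. apply rsum_le. intros i Hi.
  pose proof (ftp_step _ _ _ _ _ _ Hp i Hi). pose proof (ftp_tag _ _ _ _ _ _ Hp i Hi).
  split; [lra | apply Hfg; assumption].
Qed.

Lemma ftp_rsum_abs_le a b delta n p t f g : fine_tagged_partition a b delta n p t ->
  (forall x, a <= x <= b -> Rabs (f x) <= g x) -> Rabs (rsum f p t n) <= rsum g p t n.
Proof.
  intros Hp Hfg. apply Rabs_le.
  pose proof (rsum_scal (-1) g p t n) as Hneg.
  assert (Hg : forall x, a <= x <= b -> - g x <= f x <= g x)
    by (intros x Hx; pose proof (Hfg x Hx); pose proof (Rle_abs (f x));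
        pose proof (Rle_abs (- f x)); rewrite Rabs_Ropp in *; lra).
  split.
  - enough (rsum (fun x => -1 * g x) p t n <= rsum f p t n) by lra.
    apply (ftp_rsum_le _ _ _ _ _ _ _ _ Hp). intros x Hx. pose proof (Hg x Hx). lra.
  - apply (ftp_rsum_le _ _ _ _ _ _ _ _ Hp). intros x Hx. apply Hg, Hx.
Qed.

Lemma ftp_concat a b c delta n1 p1 t1 n2 p2 t2 :
  fine_tagged_partition a b delta n1 p1 t1 -> fine_tagged_partition b c delta n2 p2 t2 ->
  exists n p t, fine_tagged_partition a c delta n p t /\
    forall f, rsum f p t n = rsum f p1 t1 n1 + rsum f p2 t2 n2.
Proof.
  intros [A0 [An HA]] [B0 [Bn HB]].
  set (p := fun i => if Nat.leb i n1 then p1 i else p2 (i - n1)%nat).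
  set (t := fun i => if Nat.ltb i n1 then t1 i else t2 (i - n1)%nat).
  exists (n1 + n2)%nat, p, t. split.
  - split; [|split].
    + exact A0.
    + unfold p. destruct (Nat.leb_spec (n1 + n2) n1).
      * assert (n2 = 0%nat) by lia. subst n2. rewrite Nat.add_0_r. congruence.
      * replace (n1 + n2 - n1)%nat with n2 by lia. exact Bn.
    + intros i Hi. unfold p, t.
      destruct (Nat.leb_spec i n1), (Nat.leb_spec (S i) n1), (Nat.ltb_spec i n1); try lia.
      * apply HA. lia.
      * replace i with n1 by lia. rewrite Nat.sub_diag, Nat.sub_succ_l, Nat.sub_diag by lia.
        rewrite An, <- B0. apply HB. lia.
      * rewrite Nat.sub_succ_l by lia. apply HB. lia.
  - intros f. assert (Hm : forall m, (m <= n2)%nat ->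
      rsum f p t (n1 + m) = rsum f p1 t1 n1 + rsum f p2 t2 m).
    { induction m as [|m IH]; intros Hm.
      - rewrite Nat.add_0_r, Rplus_0_r. apply rsum_ext; intros i Hi; unfold p, t.
        + destruct (Nat.leb_spec i n1); [reflexivity|lia].
        + destruct (Nat.ltb_spec i n1); [reflexivity|lia].
      - rewrite Nat.add_succ_r. simpl rsum. rewrite IH by lia. unfold p, t.
        destruct (Nat.leb_spec (S (n1 + m)) n1), (Nat.leb_spec (n1 + m) n1),
          (Nat.ltb_spec (n1 + m) n1); try lia.
        + replace m with 0%nat in * by lia. rewrite Nat.add_0_r, Nat.sub_succ_l, Nat.sub_diag,
            An, <- B0 by lia. simpl. ring.
        + rewrite Nat.sub_succ_l by lia. replace (n1 + m - n1)%nat with m by lia. ring. }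
    apply Hm. lia.
Qed.

Lemma cousin a b delta : (forall x, 0 < delta x) -> a <= b ->
  exists n p t, fine_tagged_partition a b delta n p t.
Proof.
  intros Hd Hab.
  set (E := fun x => a <= x <= b /\ exists n p t, fine_tagged_partition a x delta n p t).
  assert (Ea : E a) by (split; [lra | exists 0%nat, (fun _ => a), (fun _ => a); apply ftp_nil]).
  destruct (completeness E) as [s [Hub Hlub]];
    [exists b; intros x [Hx _]; lra | exists a; exact Ea |].
  assert (Has : a <= s) by (apply Hub, Ea).
  assert (Hsb : s <= b) by (apply Hlub; intros x [Hx _]; lra).
  pose proof (Hd s).
  assert (Hnear : exists x, E x /\ s - delta s < x).
  { apply NNPP. intros Hno.
    enough (s <= s - delta s) by lra.
    apply Hlub. intros x Ex. apply Rnot_lt_le. eauto. }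
  destruct Hnear as [x [[Hx [n [p [t Hpt]]]] Hxs]].
  assert (x <= s) by (apply Hub; split; eauto).
  set (y := Rmin b (s + delta s / 2)).
  assert (Hys : s <= y) by (apply Rmin_glb; lra).
  assert (Hyd : y <= s + delta s / 2) by apply Rmin_r.
  assert (Ey : E y).
  { split; [split; [lra | apply Rmin_l]|].
    destruct (Req_dec x y) as [Hxy|Hxy]; [rewrite <- Hxy; eauto|].
    destruct (ftp_single x y s delta) as [p' [t' [Hs _]]];
      [lra | lra | lra | lra |].
    destruct (ftp_concat _ _ _ _ _ _ _ _ _ _ Hpt Hs) as [n'' [p'' [t'' [Hc _]]]]. eauto. }
  assert (Hyb : y = b).
  { pose proof (Hub y Ey). unfold y, Rmin in *. destruct (Rle_dec b (s + delta s / 2)); lra. }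
  rewrite <- Hyb. apply Ey.
Qed.

Lemma ftp_split a b c delta n p t : fine_tagged_partition a c delta n p t -> a <= b <= c ->
  (forall x, 0 < delta x) -> (forall x, x <> b -> delta x <= Rabs (x - b)) ->
  exists n1 p1 t1 n2 p2 t2, fine_tagged_partition a b delta n1 p1 t1 /\
    fine_tagged_partition b c delta n2 p2 t2 /\
    forall f, rsum f p t n = rsum f p1 t1 n1 + rsum f p2 t2 n2.
Proof.
  intros H Hb Hpos Hpin. revert c H Hb. induction n as [|m IH]; intros c H Hb.
  - pose proof H as [H0 [Hn _]]. assert (a = b) as <- by lra. assert (a = c) as <- by lra.
    exists 0%nat, (fun _ => a), (fun _ => a), 0%nat, (fun _ => a), (fun _ => a).
    split; [|split]; [apply ftp_nil | apply ftp_nil | intros; simpl; ring].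
  - pose proof (ftp_removelast _ _ _ _ _ _ H) as Hr.
    pose proof H as [_ [Hn HH]]. destruct (HH m ltac:(lia)) as [L1 [[L2 L3] [L4 L5]]].
    rewrite Hn in L1, L3, L5.
    destruct (Rle_lt_dec b (p m)) as [Hbm|Hbm].
    + destruct (IH (p m) Hr ltac:(lra)) as [n1 [p1 [t1 [n2 [p2 [t2 [F1 [F2 FS]]]]]]]].
      destruct (ftp_single (p m) c (t m) delta L1 (conj L2 L3) L4 L5) as [q [u [Fo So]]].
      destruct (ftp_concat _ _ _ _ _ _ _ _ _ _ F2 Fo) as [n3 [p3 [t3 [Fc Sc]]]].
      exists n1, p1, t1, n3, p3, t3. split; [exact F1|split; [exact Fc|]].
      intros f. rewrite Sc, So, <- Rplus_assoc, <- FS. simpl. rewrite Hn. ring.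
    + destruct (Req_dec b c) as [<-|Hbc].
      * exists (S m), p, t, 0%nat, (fun _ => b), (fun _ => b).
        split; [exact H|split; [apply ftp_nil | intros; simpl; ring]].
      * assert (Htb : t m = b).
        { apply NNPP. intros Hne. pose proof (Hpin (t m) Hne).
          destruct (Rle_lt_dec (t m) b);
            [rewrite Rabs_left1 in * by lra | rewrite Rabs_right in * by lra]; lra. }
        rewrite Htb in L4, L5. pose proof (Hpos b).
        destruct (ftp_single (p m) b b delta Hbm ltac:(lra) L4 ltac:(lra)) as [q1 [u1 [Fo1 So1]]].
        destruct (ftp_single b c b delta ltac:(lra) ltac:(lra) ltac:(lra) L5)
          as [q2 [u2 [Fo2 So2]]].
        destruct (ftp_concat _ _ _ _ _ _ _ _ _ _ Hr Fo1) as [n3 [p3 [t3 [Fc Sc]]]].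
        exists n3, p3, t3, 1%nat, q2, u2. split; [exact Fc|split; [exact Fo2|]].
        intros f. rewrite Sc, So1, So2. simpl. rewrite Hn, Htb. ring.
Qed.

(** * The gauge integral *)

Lemma gauge_meet (d1 d2 : R -> R) : (forall x, 0 < d1 x) -> (forall x, 0 < d2 x) ->
  exists d, (forall x, 0 < d x) /\ (forall x, d x <= d1 x) /\ (forall x, d x <= d2 x).
Proof.
  intros H1 H2. exists (fun x => Rmin (d1 x) (d2 x)).
  split; [intros x; apply Rmin_glb_lt; auto | split; intros x; [apply Rmin_l | apply Rmin_r]].
Qed.

(* For such a gauge, an interval of a fine partition containing [b] in its interior must be
   tagged at [b]; this is what allows splitting fine partitions at [b]. *)
Lemma gauge_pinned (d : R -> R) b : (forall x, 0 < d x) ->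
  exists d', (forall x, 0 < d' x) /\ (forall x, d' x <= d x) /\
    (forall x, x <> b -> d' x <= Rabs (x - b)).
Proof.
  intros Hd. exists (fun x => if Req_dec_T x b then d x else Rmin (d x) (Rabs (x - b))).
  split; [|split]; intros x; destruct (Req_dec_T x b) as [E|E].
  - apply Hd.
  - apply Rmin_glb_lt; [apply Hd | apply Rabs_pos_lt; lra].
  - lra.
  - apply Rmin_l.
  - intros Hx. contradiction.
  - intros _. apply Rmin_r.
Qed.

Lemma gauge_integral_common_partition f g a b I J e : a <= b -> 0 < e ->
  gauge_integral f a b I -> gauge_integral g a b J ->
  exists delta n p t, fine_tagged_partition a b delta n p t /\
    Rabs (rsum f p t n - I) < e /\ Rabs (rsum g p t n - J) < e.
Proof.
  intros Hab He HI HJ.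
  destruct (HI e He) as [d1 [Hd1 G1]], (HJ e He) as [d2 [Hd2 G2]].
  destruct (gauge_meet d1 d2 Hd1 Hd2) as [d [Hd [Hdd1 Hdd2]]].
  destruct (cousin a b d Hd Hab) as [n [p [t Hp]]].
  exists d, n, p, t. split; [exact Hp|].
  split; [apply G1 | apply G2]; eapply ftp_gauge_le; eauto.
Qed.

Lemma gauge_integral_unique f a b I J : a <= b ->
  gauge_integral f a b I -> gauge_integral f a b J -> I = J.
Proof.
  intros Hab HI HJ. destruct (Req_dec I J) as [|Hne]; [assumption|].
  pose proof (Rabs_pos_lt (I - J) ltac:(lra)).
  destruct (gauge_integral_common_partition f f a b I J (Rabs (I - J) / 2) Hab ltac:(lra) HI HJ)
    as [d [n [p [t [_ [A B]]]]]].
  pose proof (Rabs_triang (I - rsum f p t n) (rsum f p t n - J)).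
  rewrite Rabs_minus_sym in A. replace (I - rsum f p t n + (rsum f p t n - J)) with (I - J) in *
    by ring. lra.
Qed.

Lemma gauge_integral_le f g a b I J : a <= b -> (forall x, a <= x <= b -> f x <= g x) ->
  gauge_integral f a b I -> gauge_integral g a b J -> I <= J.
Proof.
  intros Hab Hfg HI HJ. apply Rnot_lt_le. intros Hlt.
  destruct (gauge_integral_common_partition f g a b I J ((I - J) / 2) Hab ltac:(lra) HI HJ)
    as [d [n [p [t [Hp [A B]]]]]].
  pose proof (ftp_rsum_le _ _ _ _ _ _ _ _ Hp Hfg).
  apply Rabs_def2 in A. apply Rabs_def2 in B. lra.
Qed.

Lemma gauge_integral_ext f g a b I : (forall x, f x = g x) ->
  gauge_integral f a b I -> gauge_integral g a b I.
Proof.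
  intros E H e He. destruct (H e He) as [d [Hd G]]. exists d. split; [exact Hd|].
  intros n p t Hp. erewrite <- rsum_ext; [apply (G n p t Hp) | reflexivity | intros; apply E].
Qed.

Lemma gauge_integral_lin f g a b I J al be :
  gauge_integral f a b I -> gauge_integral g a b J ->
  gauge_integral (fun x => al * f x + be * g x) a b (al * I + be * J).
Proof.
  intros HI HJ e He.
  set (e' := e / (Rabs al + Rabs be + 1)).
  pose proof (Rabs_pos al). pose proof (Rabs_pos be).
  assert (He' : 0 < e') by (apply Rdiv_lt_0_compat; lra).
  destruct (HI e' He') as [d1 [Hd1 G1]], (HJ e' He') as [d2 [Hd2 G2]].
  destruct (gauge_meet d1 d2 Hd1 Hd2) as [d [Hd [Hdd1 Hdd2]]].
  exists d. split; [exact Hd|]. intros n p t Hp. rewrite rsum_lin.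
  pose proof (G1 n p t (ftp_gauge_le _ _ _ _ _ _ _ Hdd1 Hp)) as A.
  pose proof (G2 n p t (ftp_gauge_le _ _ _ _ _ _ _ Hdd2 Hp)) as B.
  replace (al * rsum f p t n + be * rsum g p t n - (al * I + be * J)) with
    (al * (rsum f p t n - I) + be * (rsum g p t n - J)) by ring.
  eapply Rle_lt_trans; [apply Rabs_triang|]. rewrite !Rabs_mult.
  assert (Hee : (Rabs al + Rabs be + 1) * e' = e) by (unfold e'; field; lra).
  pose proof (Rabs_pos (rsum f p t n - I)). pose proof (Rabs_pos (rsum g p t n - J)).
  nra.
Qed.

Lemma gauge_integral_scal f a b I c :
  gauge_integral f a b I -> gauge_integral (fun x => c * f x) a b (c * I).
Proof.
  intros H. replace (c * I) with (c * I + 0 * I) by ring.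
  apply (gauge_integral_ext (fun x => c * f x + 0 * f x)); [intros; ring|].
  apply gauge_integral_lin; exact H.
Qed.

Lemma gauge_integral_const c a b : gauge_integral (fun _ => c) a b (c * (b - a)).
Proof.
  intros e He. exists (fun _ => 1). split; [intros; lra|].
  intros n p t [H0 [Hn _]]. rewrite rsum_const, H0, Hn, Rminus_diag, Rabs_R0. exact He.
Qed.

Lemma gauge_integral_point f a : gauge_integral f a a 0.
Proof.
  intros e He. exists (fun _ => 1). split; [intros; lra|].
  intros n p t Hp. rewrite (ftp_degenerate _ _ _ _ _ _ Hp eq_refl). simpl.
  rewrite Rminus_0_r, Rabs_R0. exact He.
Qed.

Lemma gauge_integral_Chasles f a b c I1 I2 : a <= b <= c ->
  gauge_integral f a b I1 -> gauge_integral f b c I2 -> gauge_integral f a c (I1 + I2).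
Proof.
  intros Hb H1 H2 e He.
  destruct (H1 (e / 2) ltac:(lra)) as [d1 [Hd1 G1]], (H2 (e / 2) ltac:(lra)) as [d2 [Hd2 G2]].
  destruct (gauge_meet d1 d2 Hd1 Hd2) as [d0 [Hd0 [Hd01 Hd02]]].
  destruct (gauge_pinned d0 b Hd0) as [d [Hd [Hdd0 Hpin]]].
  exists d. split; [exact Hd|]. intros n p t Hp.
  destruct (ftp_split a b c d n p t Hp Hb Hd Hpin) as [n1 [p1 [t1 [n2 [p2 [t2 [F1 [F2 FS]]]]]]]].
  assert (A : Rabs (rsum f p1 t1 n1 - I1) < e / 2)
    by (apply G1; eapply ftp_gauge_le; [|exact F1]; intros x; eapply Rle_trans; eauto).
  assert (B : Rabs (rsum f p2 t2 n2 - I2) < e / 2)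
    by (apply G2; eapply ftp_gauge_le; [|exact F2]; intros x; eapply Rle_trans; eauto).
  rewrite FS. apply Rabs_def2 in A. apply Rabs_def2 in B. apply Rabs_def1; lra.
Qed.

Fixpoint gauge_min_upto (D : nat -> R -> R) (k : nat) (x : R) : R :=
  match k with O => D O x | S k => Rmin (gauge_min_upto D k x) (D (S k) x) end.

Lemma gauge_min_upto_pos D : (forall k x, 0 < D k x) -> forall k x, 0 < gauge_min_upto D k x.
Proof. intros H k x. induction k; simpl; [|apply Rmin_glb_lt]; auto. Qed.

Lemma gauge_min_upto_le D k j x : (j <= k)%nat -> gauge_min_upto D k x <= D j x.
Proof.
  induction k as [|k IH]; intros Hj; simpl.
  - replace j with 0%nat by lia. lra.
  - destruct (Nat.eq_dec j (S k)) as [->|Hne]; [apply Rmin_r|].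
    eapply Rle_trans; [apply Rmin_l | apply IH; lia].
Qed.

Lemma inv_INR_S_lt e : 0 < e -> exists N, / INR (S N) < e.
Proof.
  intros He. destruct (INR_unbounded (/ e)) as [N HN]. exists N.
  pose proof (pos_INR N). rewrite S_INR.
  apply (Rmult_lt_reg_l (INR N + 1)); [lra|]. rewrite Rinv_r by lra.
  apply (Rmult_lt_reg_l (/ e)); [apply Rinv_0_lt_compat, He|].
  replace (/ e * ((INR N + 1) * e)) with (INR N + 1) by (field; lra). lra.
Qed.

Lemma gauge_integral_cauchy f a b : a <= b ->
  (forall e, 0 < e -> exists delta, (forall x, 0 < delta x) /\
     forall n p t n' p' t', fine_tagged_partition a b delta n p t ->
       fine_tagged_partition a b delta n' p' t' ->
       Rabs (rsum f p t n - rsum f p' t' n') < e) ->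
  exists I, gauge_integral f a b I.
Proof.
  intros Hab HC.
  destruct (choice (fun (k : nat) (d : R -> R) => (forall x, 0 < d x) /\
     forall n p t n' p' t', fine_tagged_partition a b d n p t ->
       fine_tagged_partition a b d n' p' t' ->
       Rabs (rsum f p t n - rsum f p' t' n') < / INR (S k))) as [D HD].
  { intros k. apply HC, Rinv_0_lt_compat, lt_0_INR. lia. }
  set (G := gauge_min_upto D).
  assert (HG : forall k x, 0 < G k x) by (apply gauge_min_upto_pos; intros k; apply HD).
  destruct (choice (fun (k : nat) (q : nat * (nat -> R) * (nat -> R)) =>
     fine_tagged_partition a b (G k) (fst (fst q)) (snd (fst q)) (snd q))) as [Q HQ].
  { intros k. destruct (cousin a b (G k) (HG k) Hab) as [n [p [t Hp]]].
    exists (n, p, t). exact Hp. }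
  set (s k := rsum f (snd (fst (Q k))) (snd (Q k)) (fst (fst (Q k)))).
  assert (HQD : forall N k, (N <= k)%nat ->
    fine_tagged_partition a b (D N) (fst (fst (Q k))) (snd (fst (Q k))) (snd (Q k)))
    by (intros N k Hk; eapply ftp_gauge_le; [|apply HQ]; intros x; apply gauge_min_upto_le, Hk).
  assert (Hs : forall N k l, (N <= k)%nat -> (N <= l)%nat -> Rabs (s k - s l) < / INR (S N))
    by (intros N k l Hk Hl; apply (HD N); apply HQD; assumption).
  destruct (R_complete s) as [I HI].
  { intros e He. destruct (inv_INR_S_lt e He) as [N HN]. exists N. intros k l Hk Hl.
    unfold R_dist. pose proof (Hs N k l Hk Hl). lra. }
  exists I. intros e He. destruct (inv_INR_S_lt (e / 2) ltac:(lra)) as [N HN].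
  exists (D N). split; [apply HD|]. intros n p t Hp.
  destruct (HI (e / 2) ltac:(lra)) as [N2 HN2].
  pose proof (HN2 (max N N2) ltac:(lia)) as A. unfold R_dist in A.
  assert (B : Rabs (rsum f p t n - s (max N N2)) < / INR (S N))
    by (apply (HD N); [exact Hp | apply HQD; lia]).
  pose proof (Rabs_triang (rsum f p t n - s (max N N2)) (s (max N N2) - I)).
  replace (rsum f p t n - s (max N N2) + (s (max N N2) - I)) with (rsum f p t n - I) in * by ring.
  lra.
Qed.

Lemma gauge_integral_sub f a b c d I : gauge_integral f a b I -> a <= c <= d -> d <= b ->
  exists J, gauge_integral f c d J.
Proof.
  intros HI Hcd Hdb. apply gauge_integral_cauchy; [lra|].
  intros e He. destruct (HI (e / 2) ltac:(lra)) as [g [Hg G]].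
  exists g. split; [exact Hg|].
  destruct (cousin a c g Hg ltac:(lra)) as [n1 [p1 [t1 E1]]].
  destruct (cousin d b g Hg Hdb) as [n2 [p2 [t2 E2]]].
  assert (Hext : forall n p t, fine_tagged_partition c d g n p t ->
    Rabs (rsum f p1 t1 n1 + rsum f p t n + rsum f p2 t2 n2 - I) < e / 2).
  { intros n p t Hp.
    destruct (ftp_concat _ _ _ _ _ _ _ _ _ _ E1 Hp) as [n3 [p3 [t3 [C1 S1]]]].
    destruct (ftp_concat _ _ _ _ _ _ _ _ _ _ C1 E2) as [n4 [p4 [t4 [C2 S2]]]].
    rewrite <- S1, <- S2. apply G, C2. }
  intros n p t n' p' t' Hp Hp'.
  pose proof (Hext n p t Hp) as A. pose proof (Hext n' p' t' Hp') as B.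
  apply Rabs_def2 in A. apply Rabs_def2 in B. apply Rabs_def1; lra.
Qed.

Lemma gauge_integral_split f a b c I : gauge_integral f a c I -> a <= b <= c ->
  exists I1 I2, gauge_integral f a b I1 /\ gauge_integral f b c I2 /\ I = I1 + I2.
Proof.
  intros H Hb.
  destruct (gauge_integral_sub f a c a b I H ltac:(lra) ltac:(lra)) as [I1 H1].
  destruct (gauge_integral_sub f a c b c I H ltac:(lra) ltac:(lra)) as [I2 H2].
  exists I1, I2. split; [exact H1 | split; [exact H2|]].
  apply (gauge_integral_unique f a c); [lra | exact H |].
  apply (gauge_integral_Chasles f a b c); auto.
Qed.

Lemma rsum_indicator_le a b delta n p t c : 0 <= delta c ->
  fine_tagged_partition a b delta n p t ->
  rsum (fun x => if Req_dec_T x c then 1 else 0) p t n <= 2 * delta c.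
Proof.
  intros Hc.
  (* The intervals tagged by [c] are disjoint and lie in [(c - delta c, c + delta c)]. *)
  enough (H : forall b, fine_tagged_partition a b delta n p t ->
    rsum (fun x => if Req_dec_T x c then 1 else 0) p t n <= 2 * delta c /\
    rsum (fun x => if Req_dec_T x c then 1 else 0) p t n <= Rmax 0 (b - (c - delta c)))
    by (intros Hp; apply (H b Hp)).
  induction n as [|m IH]; intros b' Hp; simpl.
  - split; [lra | apply Rmax_l].
  - destruct (IH (p m) (ftp_removelast _ _ _ _ _ _ Hp)) as [IH1 IH2].
    pose proof Hp as [_ [Hn HH]]. destruct (HH m ltac:(lia)) as [L1 [_ [L4 L5]]].
    rewrite Hn in L1, L5 |- *. unfold Rmax in *.
    destruct (Req_dec_T (t m) c) as [Htc|Hne]; [rewrite Htc in L4, L5|];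
      destruct (Rle_dec 0 (p m - (c - delta c))), (Rle_dec 0 (b' - (c - delta c))); lra.
Qed.

Lemma gauge_integral_zero_except_point f a b c :
  (forall x, a <= x <= b -> x <> c -> f x = 0) -> gauge_integral f a b 0.
Proof.
  intros Hz e He.
  set (k := e / (2 * (Rabs (f c) + 1))).
  pose proof (Rabs_pos (f c)).
  assert (Hk : 0 < k) by (apply Rdiv_lt_0_compat; lra).
  set (delta x := if Req_dec_T x c then k else 1).
  assert (Hdc : delta c = k)
    by (unfold delta; destruct (Req_dec_T c c); [reflexivity | contradiction]).
  exists delta. split; [intros x; unfold delta; destruct (Req_dec_T x c); lra|].
  intros n p t Hp. rewrite Rminus_0_r.
  eapply Rle_lt_trans.
  { apply (ftp_rsum_abs_le _ _ _ _ _ _ _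
      (fun x => Rabs (f c) * (if Req_dec_T x c then 1 else 0)) Hp).
    intros x Hx. destruct (Req_dec_T x c) as [->|Hne]; [lra|].
    rewrite Hz by auto. rewrite Rabs_R0. lra. }
  rewrite rsum_scal.
  pose proof (rsum_indicator_le a b delta n p t c ltac:(lra) Hp) as Hind. rewrite Hdc in Hind.
  assert (Hke : Rabs (f c) * (2 * k) < e).
  { unfold k. apply (Rmult_lt_reg_r (Rabs (f c) + 1)); [lra|].
    replace (Rabs (f c) * (2 * (e / (2 * (Rabs (f c) + 1)))) * (Rabs (f c) + 1))
      with (Rabs (f c) * e) by (field; lra). nra. }
  pose proof (Rmult_le_compat_l _ _ _ (Rabs_pos (f c)) Hind). lra.
Qed.

Lemma gauge_integral_extend f L I a b : 0 <= L -> (forall x, L < Rabs x -> f x = 0) ->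
  gauge_integral f (- L) L I -> a <= - L -> L <= b -> gauge_integral f a b I.
Proof.
  intros HL Hz HI Ha Hb.
  assert (H1 : gauge_integral f a (- L) 0).
  { apply (gauge_integral_zero_except_point f a (- L) (- L)).
    intros x Hx Hne. apply Hz. rewrite Rabs_left; lra. }
  assert (H2 : gauge_integral f L b 0).
  { apply (gauge_integral_zero_except_point f L b L).
    intros x Hx Hne. apply Hz. rewrite Rabs_right; lra. }
  replace I with (0 + I + 0) by ring.
  apply (gauge_integral_Chasles f a L b); [lra | | exact H2].
  apply (gauge_integral_Chasles f a (- L) L); [lra | exact H1 | exact HI].
Qed.

Lemma Rint_eq f I : Rint_cs f I -> Rint f = I.
Proof.
  intros H. unfold Rint.
  assert (H' : Rint_cs f (epsilon (inhabits 0) (fun I => Rint_cs f I)))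
    by (apply epsilon_spec; eauto).
  destruct H as [L [HL [Hz HI]]], H' as [L' [HL' [Hz' HI']]].
  pose proof (Rmax_l L L'). pose proof (Rmax_r L L'). set (M := Rmax L L') in *.
  apply (gauge_integral_unique f (- M) M); [lra | |].
  - apply (gauge_integral_extend f L'); auto; lra.
  - apply (gauge_integral_extend f L); auto; lra.
Qed.

Section LipschitzProduct.

Variables (f g : R -> R) (K G : R).
Hypothesis f_ge0 : forall x, 0 <= f x.
Hypothesis K_ge0 : 0 <= K.
Hypothesis g_lipschitz : forall x y, Rabs (g x - g y) <= K * Rabs (x - y).
Hypothesis g_bounded : forall x, Rabs (g x) <= G.

Lemma rsum_mul_lipschitz u v delta n p t : fine_tagged_partition u v delta n p t ->
  Rabs (rsum (fun x => f x * g x) p t n - g u * rsum f p t n) <= K * (v - u) * rsum f p t n.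
Proof.
  intros Hp. rewrite <- !rsum_scal.
  replace (rsum (fun x => f x * g x) p t n - rsum (fun x => g u * f x) p t n)
    with (rsum (fun x => 1 * (f x * g x) + -1 * (g u * f x)) p t n) by (rewrite rsum_lin; ring).
  apply (ftp_rsum_abs_le _ _ _ _ _ _ _ _ Hp). intros x Hx.
  replace (1 * (f x * g x) + -1 * (g u * f x)) with (f x * (g x - g u)) by ring.
  rewrite Rabs_mult, (Rabs_right (f x)) by (apply Rle_ge, f_ge0).
  pose proof (g_lipschitz x u) as Hl. rewrite (Rabs_right (x - u)) in Hl by lra.
  assert (Hk : K * (x - u) <= K * (v - u)) by (apply Rmult_le_compat_l; lra).
  pose proof (Rmult_le_compat_l (f x) _ _ (f_ge0 x) Hl).
  pose proof (Rmult_le_compat_l (f x) _ _ (f_ge0 x) Hk). lra.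
Qed.

(* [J] is the sum over the grid cells of [g] at the left end times the integral of [f]. *)
Lemma mul_lipschitz_grid_approx a b I h e m : gauge_integral f a b I -> 0 <= h -> 0 < e ->
  a + INR m * h <= b ->
  exists delta J, (forall x, 0 < delta x) /\
    forall n p t, fine_tagged_partition a (a + INR m * h) delta n p t ->
      Rabs (rsum (fun x => f x * g x) p t n - J) <= K * h * rsum f p t n + INR m * G * e.
Proof.
  intros HI Hh He.
  assert (HG : 0 <= G) by (pose proof (Rabs_pos (g 0)); pose proof (g_bounded 0); lra).
  induction m as [|m IH]; intros Hm.
  - exists (fun _ => 1), 0. split; [intros; lra|]. intros n p t Hp.
    rewrite (ftp_degenerate _ _ _ _ _ _ Hp ltac:(simpl; ring)). simpl.
    rewrite Rminus_0_r, Rabs_R0. lra.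
  - pose proof (pos_INR m).
    assert (Hx1 : a + INR (S m) * h = a + INR m * h + h) by (rewrite S_INR; ring).
    assert (Hx0 : a <= a + INR m * h) by nra.
    rewrite Hx1 in Hm |- *.
    destruct (IH ltac:(lra)) as [d1 [J1 [Hd1 G1]]].
    set (x0 := a + INR m * h) in *.
    destruct (gauge_integral_sub f a b x0 (x0 + h) I HI ltac:(lra) Hm) as [Im HIm].
    destruct (HIm e He) as [d2 [Hd2 G2]].
    destruct (gauge_meet d1 d2 Hd1 Hd2) as [d0 [Hd0 [Hd01 Hd02]]].
    destruct (gauge_pinned d0 x0 Hd0) as [d [Hd [Hdd0 Hpin]]].
    exists d, (J1 + g x0 * Im). split; [exact Hd|]. intros n p t Hp.
    destruct (ftp_split a x0 (x0 + h) d n p t Hp ltac:(lra) Hd Hpin)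
      as [n1 [p1 [t1 [n2 [p2 [t2 [F1 [F2 FS]]]]]]]].
    assert (A := G1 n1 p1 t1 ltac:(eapply ftp_gauge_le; [|exact F1];
      intros x; eapply Rle_trans; eauto)).
    assert (B := G2 n2 p2 t2 ltac:(eapply ftp_gauge_le; [|exact F2];
      intros x; eapply Rle_trans; eauto)).
    pose proof (rsum_mul_lipschitz _ _ _ _ _ _ F2) as C.
    replace (x0 + h - x0) with h in C by ring.
    pose proof (g_bounded x0) as Gx.
    assert (D : Rabs (g x0 * (rsum f p2 t2 n2 - Im)) <= G * e)
      by (rewrite Rabs_mult; apply Rmult_le_compat; try apply Rabs_pos; lra).
    rewrite !FS, S_INR.
    set (fg := fun x => f x * g x).
    replace (rsum fg p1 t1 n1 + rsum fg p2 t2 n2 - (J1 + g x0 * Im)) with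
      ((rsum fg p1 t1 n1 - J1) + (rsum fg p2 t2 n2 - g x0 * rsum f p2 t2 n2)
        + g x0 * (rsum f p2 t2 n2 - Im)) by ring.
    pose proof (Rabs_triang (rsum fg p1 t1 n1 - J1 + (rsum fg p2 t2 n2 - g x0 * rsum f p2 t2 n2))
      (g x0 * (rsum f p2 t2 n2 - Im))).
    pose proof (Rabs_triang (rsum fg p1 t1 n1 - J1) (rsum fg p2 t2 n2 - g x0 * rsum f p2 t2 n2)).
    unfold fg in *. lra.
Qed.

Lemma gauge_integral_mul_lipschitz a b I : gauge_integral f a b I -> a <= b ->
  exists J, gauge_integral (fun x => f x * g x) a b J.
Proof.
  intros HI Hab. apply gauge_integral_cauchy; [exact Hab|]. intros e He.
  pose proof (Rabs_pos I).
  assert (HG : 0 <= G) by (pose proof (Rabs_pos (g 0)); pose proof (g_bounded 0); lra).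
  destruct (INR_unbounded (4 * K * (b - a) * (Rabs I + 1) / e)) as [N HN].
  assert (HN0 : 0 < INR N).
  { apply (Rle_lt_trans _ (4 * K * (b - a) * (Rabs I + 1) / e)); [|lra].
    apply Rmult_le_pos; [|left; apply Rinv_0_lt_compat, He].
    apply Rmult_le_pos; [apply Rmult_le_pos|]; lra. }
  set (h := (b - a) / INR N). set (e' := e / (4 * INR N * (G + 1))).
  assert (Hh : 0 <= h) by (apply Rmult_le_pos; [lra | left; apply Rinv_0_lt_compat, HN0]).
  assert (He' : 0 < e') by (apply Rdiv_lt_0_compat; nra).
  assert (Hb : a + INR N * h = b) by (unfold h; field; lra).
  destruct (mul_lipschitz_grid_approx a b I h e' N HI Hh He' ltac:(lra)) as [d1 [J [Hd1 G1]]].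
  rewrite Hb in G1.
  destruct (HI 1 ltac:(lra)) as [d2 [Hd2 G2]].
  destruct (gauge_meet d1 d2 Hd1 Hd2) as [d [Hd [Hdd1 Hdd2]]].
  assert (Hbound : forall n p t, fine_tagged_partition a b d n p t ->
    Rabs (rsum (fun x => f x * g x) p t n - J) < e / 2).
  { intros n p t Hp.
    pose proof (G1 n p t (ftp_gauge_le _ _ _ _ _ _ _ Hdd1 Hp)) as A.
    pose proof (G2 n p t (ftp_gauge_le _ _ _ _ _ _ _ Hdd2 Hp)) as B.
    apply Rabs_def2 in B. pose proof (Rle_abs I).
    assert (Hf : K * h * rsum f p t n <= K * h * (Rabs I + 1))
      by (apply Rmult_le_compat_l; [nra | lra]).
    assert (Hgrid : K * h * (Rabs I + 1) < e / 4).
    { unfold h. apply (Rmult_lt_reg_r (INR N * 4 / e)); [apply Rdiv_lt_0_compat; lra|].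
      replace (K * ((b - a) / INR N) * (Rabs I + 1) * (INR N * 4 / e))
        with (4 * K * (b - a) * (Rabs I + 1) / e) by (field; lra).
      replace (e / 4 * (INR N * 4 / e)) with (INR N) by (field; lra). lra. }
    assert (Hpieces : INR N * G * e' < e / 4).
    { unfold e'. replace (INR N * G * (e / (4 * INR N * (G + 1)))) with (e / 4 * (G / (G + 1)))
        by (field; lra).
      assert (G / (G + 1) < 1) by (apply (Rmult_lt_reg_r (G + 1)); [lra | field_simplify; lra]).
      nra. }
    lra. }
  exists d. split; [exact Hd|]. intros n p t n' p' t' Hp Hp'.
  pose proof (Hbound n p t Hp) as A. pose proof (Hbound n' p' t' Hp') as B.
  apply Rabs_def2 in A. apply Rabs_def2 in B. apply Rabs_def1; lra.
Qed.

End LipschitzProduct.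

(** * Elementary trigonometry *)

Lemma Rabs_sin_le y : Rabs (sin y) <= Rabs y.
Proof.
  assert (Hpos : forall z, 0 <= z -> Rabs (sin z) <= z).
  { intros z Hz. destruct (Req_dec z 0) as [->|Hne]; [rewrite sin_0, Rabs_R0; lra|].
    pose proof (sin_lt_x z ltac:(lra)). pose proof (SIN_bound z). pose proof PI2_3_2.
    apply Rabs_le. split; [|lra].
    destruct (Rle_lt_dec 1 z); [lra|]. pose proof (sin_ge_0 z ltac:(lra) ltac:(lra)). lra. }
  destruct (Rle_lt_dec 0 y); [rewrite (Rabs_right y) by lra; auto|].
  rewrite (Rabs_left y), <- Rabs_Ropp, <- sin_neg by lra. apply Hpos. lra.
Qed.

Lemma cos_lipschitz u v : Rabs (cos u - cos v) <= Rabs (u - v).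
Proof.
  rewrite form2, !Rabs_mult. replace (Rabs (-2)) with 2 by (rewrite Rabs_left; lra).
  pose proof (Rabs_sin_le ((u - v) / 2)) as Hs. pose proof (SIN_bound ((u + v) / 2)).
  assert (Rabs (sin ((u + v) / 2)) <= 1) by (apply Rabs_le; lra).
  unfold Rdiv in Hs. rewrite Rabs_mult, (Rabs_right (/ 2)) in Hs by lra.
  pose proof (Rabs_pos (sin ((u - v) / 2))). pose proof (Rabs_pos (sin ((u + v) / 2))). nra.
Qed.

Lemma sin_lipschitz u v : Rabs (sin u - sin v) <= Rabs (u - v).
Proof.
  rewrite form4, !Rabs_mult. replace (Rabs 2) with 2 by (rewrite Rabs_right; lra).
  pose proof (Rabs_sin_le ((u - v) / 2)) as Hs. pose proof (COS_bound ((u + v) / 2)).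
  assert (Rabs (cos ((u + v) / 2)) <= 1) by (apply Rabs_le; lra).
  unfold Rdiv in Hs. rewrite Rabs_mult, (Rabs_right (/ 2)) in Hs by lra.
  pose proof (Rabs_pos (sin ((u - v) / 2))). pose proof (Rabs_pos (cos ((u + v) / 2))). nra.
Qed.

Lemma cos_period_Z y z : cos (y + 2 * IZR z * PI) = cos y.
Proof.
  destruct (Z_le_gt_dec 0 z) as [Hz|Hz].
  - rewrite <- (Z2Nat.id z Hz), <- INR_IZR_INZ. apply cos_period.
  - rewrite <- (cos_period (y + 2 * IZR z * PI) (Z.to_nat (- z))).
    rewrite INR_IZR_INZ, Z2Nat.id, opp_IZR by lia. f_equal. ring.
Qed.

Lemma exists_angle al be : al ^ 2 + be ^ 2 = 1 -> exists phi, cos phi = al /\ sin phi = be.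
Proof.
  intros H. assert (Ha : -1 <= al <= 1) by nra.
  assert (Hs : sqrt (1 - al²) = Rabs be).
  { replace (1 - al²) with (be²) by (unfold Rsqr; lra). apply sqrt_Rsqr_abs. }
  destruct (Rle_lt_dec 0 be).
  - exists (acos al). rewrite cos_acos, sin_acos, Hs, Rabs_right by lra. auto.
  - exists (- acos al). rewrite cos_neg, sin_neg, cos_acos, sin_acos, Hs, Rabs_left by lra.
    split; [reflexivity | ring].
Qed.

Lemma cos_phase_shift th al be : al ^ 2 + be ^ 2 = 1 ->
  exists phi, forall x, cos (Rabs th * x - phi) = al * cos (th * x) + be * sin (th * x).
Proof.
  intros H. destruct (Rle_lt_dec 0 th).
  - destruct (exists_angle al be H) as [phi [Hc Hs]]. exists phi. intros x.
    rewrite Rabs_right, cos_minus, Hc, Hs by lra. ring.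
  - destruct (exists_angle al (- be) ltac:(lra)) as [phi [Hc Hs]]. exists phi. intros x.
    rewrite Rabs_left, cos_minus, Hc, Hs by lra.
    replace (- th * x) with (- (th * x)) by ring. rewrite cos_neg, sin_neg. ring.
Qed.

Lemma cos_le_off_peaks y a (k : Z) : 0 <= a <= PI ->
  a <= y - 2 * IZR k * PI <= 2 * PI - a -> cos y <= cos a.
Proof.
  intros Ha Hy. replace y with ((y - 2 * IZR k * PI) + 2 * IZR k * PI) by ring.
  rewrite cos_period_Z. set (v := y - 2 * IZR k * PI) in *.
  destruct (Rle_lt_dec v PI).
  - apply cos_decr_1; lra.
  - replace (cos v) with (cos (2 * PI - v)) by (rewrite cos_minus, cos_2PI, sin_2PI; ring).
    apply cos_decr_1; lra.
Qed.

Lemma one_minus_cos_ge a : 0 <= a <= PI / 2 -> a ^ 2 / 4 <= 1 - cos a.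
Proof.
  intros Ha. pose proof PI2_3_2. pose proof PI_4.
  destruct (cos_bound a 0 ltac:(lra) ltac:(lra)) as [_ Hc].
  replace (cos_approx a (2 * (0 + 1))) with (1 - a ^ 2 / 2 + a ^ 4 / 24) in Hc
    by (unfold cos_approx, cos_term; simpl; field).
  assert (a * a <= 6) by nra. nra.
Qed.

(** * Mass away from the peaks of a cosine *)

Section PeriodicLowerBound.

Variables (r F : R -> R) (B lam P w : R).
Hypothesis r_bounds : forall x, 0 <= r x <= B.
Hypothesis F_ge0 : forall x, 0 <= F x.
Hypothesis lam_ge0 : 0 <= lam.
Hypothesis w_pos : 0 < w.
Hypothesis w_le : 2 * w <= P.

Lemma gauge_integral_one_period_ge u JF JR :
  (forall x, u + w <= x <= u + P - w -> lam * r x <= F x) ->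
  gauge_integral F u (u + P) JF -> gauge_integral r u (u + P) JR ->
  lam * (JR - 2 * B * w) <= JF.
Proof.
  intros Hmid GF GR.
  destruct (gauge_integral_split F u (u + w) (u + P) JF GF ltac:(lra))
    as [F1 [F23 [HF1 [HF23 ->]]]].
  destruct (gauge_integral_split F (u + w) (u + P - w) (u + P) F23 HF23 ltac:(lra))
    as [F2 [F3 [HF2 [HF3 ->]]]].
  destruct (gauge_integral_split r u (u + w) (u + P) JR GR ltac:(lra))
    as [R1 [R23 [HR1 [HR23 ->]]]].
  destruct (gauge_integral_split r (u + w) (u + P - w) (u + P) R23 HR23 ltac:(lra))
    as [R2 [R3 [HR2 [HR3 ->]]]].
  assert (A1 : 0 <= F1).
  { pose proof (gauge_integral_le (fun _ => 0) F u (u + w) _ F1 ltac:(lra)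
      ltac:(intros; apply F_ge0)
      (gauge_integral_const 0 _ _) HF1). lra. }
  assert (A3 : 0 <= F3).
  { pose proof (gauge_integral_le (fun _ => 0) F (u + P - w) (u + P) _ F3 ltac:(lra)
      ltac:(intros; apply F_ge0) (gauge_integral_const 0 _ _) HF3). lra. }
  assert (B1 : R1 <= B * w).
  { pose proof (gauge_integral_le r (fun _ => B) u (u + w) R1 _ ltac:(lra)
      ltac:(intros; apply r_bounds) HR1 (gauge_integral_const B _ _)). lra. }
  assert (B3 : R3 <= B * w).
  { pose proof (gauge_integral_le r (fun _ => B) (u + P - w) (u + P) R3 _ ltac:(lra)
      ltac:(intros; apply r_bounds) HR3 (gauge_integral_const B _ _)). lra. }
  assert (A2 : lam * R2 <= F2).
  { apply (gauge_integral_le (fun x => lam * r x) F (u + w) (u + P - w)); auto; [lra|].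
    apply gauge_integral_scal, HR2. }
  nra.
Qed.

Lemma gauge_integral_periods_ge u :
  (forall (j : nat) x, u + INR j * P + w <= x <= u + INR j * P + P - w -> lam * r x <= F x) ->
  forall m JF JR, gauge_integral F u (u + INR m * P) JF -> gauge_integral r u (u + INR m * P) JR ->
  lam * (JR - 2 * B * w * INR m) <= JF.
Proof.
  intros Hmid. induction m as [|m IH]; intros JF JR GF GR.
  - simpl in *. rewrite Rmult_0_l, Rplus_0_r in GF, GR.
    rewrite (gauge_integral_unique F u u JF 0 ltac:(lra) GF (gauge_integral_point F u)).
    rewrite (gauge_integral_unique r u u JR 0 ltac:(lra) GR (gauge_integral_point r u)). lra.
  - pose proof (pos_INR m).
    assert (Em : u + INR (S m) * P = u + INR m * P + P) by (rewrite S_INR; ring).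
    rewrite Em in GF, GR.
    destruct (gauge_integral_split F u (u + INR m * P) _ JF GF ltac:(nra))
      as [F1 [F2 [HF1 [HF2 ->]]]].
    destruct (gauge_integral_split r u (u + INR m * P) _ JR GR ltac:(nra))
      as [R1 [R2 [HR1 [HR2 ->]]]].
    pose proof (IH F1 R1 HF1 HR1).
    pose proof (gauge_integral_one_period_ge (u + INR m * P) F2 R2 (Hmid m) HF2 HR2).
    rewrite S_INR. nra.
Qed.

End PeriodicLowerBound.

Lemma periodic_grid_cover L P x0 : 0 <= L -> 0 < P -> exists (m : Z) (n : nat),
  x0 + IZR m * P <= - L /\ L <= x0 + IZR m * P + INR n * P /\ INR n * P <= 2 * L + 2 * P.
Proof.
  intros HL HP.
  set (y := (- L - x0) / P). set (z := 2 * L / P).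
  destruct (archimed y) as [Hy1 Hy2], (archimed z) as [Hz1 Hz2].
  assert (Hz0 : 0 <= z) by (apply Rmult_le_pos; [lra | left; apply Rinv_0_lt_compat, HP]).
  assert (Ey : y * P = - L - x0) by (unfold y; field; lra).
  assert (Ez : z * P = 2 * L) by (unfold z; field; lra).
  exists (up y - 1)%Z, (S (Z.to_nat (up z))).
  rewrite minus_IZR, S_INR, INR_IZR_INZ, Z2Nat.id by (apply le_IZR; lra).
  assert ((IZR (up y) - 1) * P <= y * P) by (apply Rmult_le_compat_r; lra).
  assert ((y - 1) * P <= (IZR (up y) - 1) * P) by (apply Rmult_le_compat_r; lra).
  assert ((z + 1) * P <= (IZR (up z) + 1) * P) by (apply Rmult_le_compat_r; lra).
  assert ((IZR (up z) + 1) * P <= (z + 2) * P) by (apply Rmult_le_compat_r; lra).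
  nra.
Qed.

(** * Decay of the Fourier transform away from the origin *)

Section FourierDecay.

Variables (r : R -> R) (L B : R).
Hypothesis r_ge0 : forall x, 0 <= r x.
Hypothesis r_le : forall x, r x <= B.
Hypothesis B_ge1 : 1 <= B.
Hypothesis L_ge0 : 0 <= L.
Hypothesis r_vanish : forall x, L < Rabs x -> r x = 0.
Hypothesis r_int : gauge_integral r (- L) L 1.

Lemma rhat_abs2_eq k : exists Cv Sv,
  gauge_integral (fun x => r x * cos (2 * PI * k * x)) (- L) L Cv /\
  gauge_integral (fun x => r x * sin (2 * PI * k * x)) (- L) L Sv /\
  rhat_abs2 r k = Cv ^ 2 + Sv ^ 2.
Proof.
  set (th := 2 * PI * k).
  assert (Hlip : forall h : R -> R, (forall u v, Rabs (h u - h v) <= Rabs (u - v)) ->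
    forall x y, Rabs (h (th * x) - h (th * y)) <= Rabs th * Rabs (x - y)).
  { intros h Hh x y. rewrite <- Rabs_mult. replace (th * (x - y)) with (th * x - th * y) by ring.
    apply Hh. }
  destruct (gauge_integral_mul_lipschitz r (fun x => cos (th * x)) (Rabs th) 1 r_ge0 (Rabs_pos th)
    (Hlip cos cos_lipschitz) (fun x => Rabs_le _ _ (COS_bound _)) (- L) L 1 r_int ltac:(lra))
    as [Cv HCv].
  destruct (gauge_integral_mul_lipschitz r (fun x => sin (th * x)) (Rabs th) 1 r_ge0 (Rabs_pos th)
    (Hlip sin sin_lipschitz) (fun x => Rabs_le _ _ (SIN_bound _)) (- L) L 1 r_int ltac:(lra))
    as [Sv HSv].
  exists Cv, Sv. split; [exact HCv | split; [exact HSv|]].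
  unfold rhat_abs2, rhat_re, rhat_im. fold th.
  rewrite (Rint_eq _ Cv), (Rint_eq _ (- Sv)); [ring | |].
  - exists L. split; [exact L_ge0 | split].
    + intros x Hx. rewrite r_vanish by exact Hx. ring.
    + replace (- Sv) with (-1 * Sv) by ring.
      apply (gauge_integral_ext (fun x => -1 * (r x * sin (th * x)))); [intros; ring|].
      apply gauge_integral_scal, HSv.
  - exists L. split; [exact L_ge0 | split; [|exact HCv]].
    intros x Hx. rewrite r_vanish by exact Hx. ring.
Qed.

Lemma integral_one_minus_cos_ge om phi a J : 0 < om -> 0 < a <= PI ->
  B * a * (L / PI + 2 / om) <= 1 / 8 ->
  gauge_integral (fun x => r x * (1 - cos (om * x - phi))) (- L) L J ->
  3 / 4 * (1 - cos a) <= J.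
Proof.
  intros Hom Ha Hsmall HJ. pose proof PI_RGT_0.
  set (lam := 1 - cos a). set (P := 2 * PI / om). set (w := a / om).
  assert (Hlam : 0 <= lam) by (unfold lam; pose proof (COS_bound a); lra).
  assert (HP : 0 < P) by (apply Rdiv_lt_0_compat; lra).
  assert (Hw : 0 < w) by (apply Rdiv_lt_0_compat; lra).
  assert (Hwom : w * om = a) by (unfold w; field; lra).
  assert (HPom : P * om = 2 * PI) by (unfold P; field; lra).
  assert (H2w : 2 * w <= P) by (apply (Rmult_le_reg_r om); lra).
  destruct (periodic_grid_cover L P (phi / om) L_ge0 HP) as [m [n [Hu1 [Hu2 Hn]]]].
  set (u := phi / om + IZR m * P) in *.
  set (F := fun x => r x * (1 - cos (om * x - phi))).
  assert (HF0 : forall x, 0 <= F x).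
  { intros x. apply Rmult_le_pos; [apply r_ge0 | pose proof (COS_bound (om * x - phi)); lra]. }
  assert (GF : gauge_integral F u (u + INR n * P) J).
  { apply (gauge_integral_extend F L); [exact L_ge0 | | exact HJ | lra | lra].
    intros x Hx. unfold F. rewrite r_vanish by exact Hx. ring. }
  assert (GR : gauge_integral r u (u + INR n * P) 1)
    by (apply (gauge_integral_extend r L);
        [exact L_ge0 | exact r_vanish | exact r_int | lra | lra]).
  assert (Hmid : forall (j : nat) x,
    u + INR j * P + w <= x <= u + INR j * P + P - w -> lam * r x <= F x).
  { intros j x Hx. unfold F, lam. rewrite Rmult_comm. apply Rmult_le_compat_l; [apply r_ge0|].
    enough (cos (om * x - phi) <= cos a) by lra.
    apply (cos_le_off_peaks _ _ (m + Z.of_nat j)); [lra|].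
    replace (om * x - phi - 2 * IZR (m + Z.of_nat j) * PI) with (om * (x - u - INR j * P))
      by (unfold u, P; rewrite plus_IZR, <- INR_IZR_INZ; field; lra).
    split.
    - rewrite <- Hwom, Rmult_comm. apply Rmult_le_compat_l; lra.
    - replace (2 * PI - a) with (om * (P - w)) by lra. apply Rmult_le_compat_l; lra. }
  assert (Hbad : 2 * B * w * INR n <= 1 / 4).
  { assert (Hn' : INR n <= L * om / PI + 2).
    { apply (Rmult_le_reg_r P); [exact HP|].
      replace ((L * om / PI + 2) * P) with (2 * L + 2 * P) by (unfold P; field; lra). lra. }
    replace (2 * B * w * INR n) with (2 * B * (a / om) * INR n) by reflexivity.
    replace (B * a * (L / PI + 2 / om)) with (B * (a / om) * (L * om / PI + 2)) in Hsmall
      by (field; lra).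
    assert (0 <= B * (a / om)) by (apply Rmult_le_pos; [lra | left; exact Hw]). nra. }
  pose proof (gauge_integral_periods_ge r F B lam P w (fun x => conj (r_ge0 x) (r_le x)) HF0 Hlam Hw
    H2w u Hmid n J 1 GF GR).
  fold lam. nra.
Qed.

Lemma rhat_abs2_le_one_minus_cos k a : 0 < a <= PI / 2 ->
  B * a * (L / PI + 2 / Rabs (2 * PI * k)) <= 1 / 8 -> k <> 0 ->
  rhat_abs2 r k <= 1 - 3 / 4 * (1 - cos a).
Proof.
  intros Ha Hsmall Hk. pose proof PI_RGT_0.
  destruct (rhat_abs2_eq k) as [Cv [Sv [HCv [HSv ->]]]].
  set (rho := sqrt (Cv ^ 2 + Sv ^ 2)).
  assert (Hrho2 : rho * rho = Cv ^ 2 + Sv ^ 2) by (apply sqrt_sqrt; nra).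
  assert (Hrho0 : 0 <= rho) by apply sqrt_pos.
  rewrite <- Hrho2. pose proof (COS_bound a). pose proof (cos_ge_0 a ltac:(lra) ltac:(lra)).
  destruct (Req_dec rho 0) as [Hz|Hnz]; [rewrite Hz; lra|].
  destruct (cos_phase_shift (2 * PI * k) (Cv / rho) (Sv / rho)) as [phi Hphi].
  { replace ((Cv / rho) ^ 2 + (Sv / rho) ^ 2) with ((Cv ^ 2 + Sv ^ 2) / (rho * rho))
      by (field; lra). rewrite <- Hrho2. field. lra. }
  assert (HJ : gauge_integral (fun x => r x * (1 - cos (Rabs (2 * PI * k) * x - phi))) (- L) L
                 (1 - rho)).
  { replace (1 - rho) with (1 * (1 * 1 + - (Cv / rho) * Cv) + - (Sv / rho) * Sv)
      by (transitivity (1 - (Cv ^ 2 + Sv ^ 2) / rho); [field | rewrite <- Hrho2; field]; lra).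
    apply (gauge_integral_ext (fun x => 1 * (1 * r x + - (Cv / rho) * (r x * cos (2 * PI * k * x)))
                                      + - (Sv / rho) * (r x * sin (2 * PI * k * x)))).
    { intros x. rewrite Hphi. ring. }
    apply gauge_integral_lin; [apply gauge_integral_lin|]; assumption. }
  assert (Hom : 0 < Rabs (2 * PI * k))
    by (apply Rabs_pos_lt; apply Rmult_integral_contrapositive; split; lra).
  pose proof (integral_one_minus_cos_ge _ _ a _ Hom ltac:(lra) Hsmall HJ).
  assert (rho <= 1) by lra. nra.
Qed.

Lemma rhat_abs2_le_away_from_0 : exists c, 0 < c /\
  forall T k, 0 < T <= 1 -> T <= Rabs k -> rhat_abs2 r k <= 1 - c * T ^ 2.
Proof.
  pose proof PI2_3_2. pose proof PI_4.
  assert (HBL : 1 <= B * (L + 1)) by nra.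
  (* With [a = c0 T] the peaks of the cosine carry at most a quarter of the mass of [r]. *)
  set (c0 := PI / (8 * B * (L + 1))).
  assert (Hc0 : 0 < c0 <= 1 / 2).
  { unfold c0. split; [apply Rdiv_lt_0_compat; nra|].
    apply (Rmult_le_reg_r (8 * B * (L + 1))); [nra|].
    replace (PI / (8 * B * (L + 1)) * (8 * B * (L + 1))) with PI by (field; nra). nra. }
  exists (3 / 16 * c0 ^ 2). split; [nra|]. intros T k HT Hk.
  assert (Ha : 0 < c0 * T <= 1 / 2)
    by (split; [nra|]; assert (c0 * T <= c0 * 1) by (apply Rmult_le_compat_l; lra); lra).
  assert (Hsmall : B * (c0 * T) * (L / PI + 2 / Rabs (2 * PI * k)) <= 1 / 8).
  { assert (Hinv : 2 / Rabs (2 * PI * k) <= 1 / (PI * T)).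
    { rewrite Rabs_mult, (Rabs_right (2 * PI)) by lra.
      unfold Rdiv. replace (1 * / (PI * T)) with (2 * / (2 * PI * T)) by (field; nra).
      apply Rmult_le_compat_l, Rinv_le_contravar; nra. }
    assert (B * (c0 * T) * (L / PI + 1 / (PI * T)) = (L * T + 1) / (8 * (L + 1)))
      by (unfold c0; field; nra).
    assert ((L * T + 1) / (8 * (L + 1)) <= 1 / 8).
    { apply (Rmult_le_reg_r (8 * (L + 1))); [lra|].
      replace ((L * T + 1) / (8 * (L + 1)) * (8 * (L + 1))) with (L * T + 1) by (field; lra).
      nra. }
    assert (0 <= B * (c0 * T)) by nra. nra. }
  assert (Hk0 : k <> 0) by (intros ->; rewrite Rabs_R0 in Hk; lra).
  pose proof (rhat_abs2_le_one_minus_cos k (c0 * T) ltac:(pose proof PI_RGT_0; lra) Hsmall Hk0).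
  pose proof (one_minus_cos_ge (c0 * T) ltac:(lra)). nra.
Qed.

End FourierDecay.

Lemma Rpower_unbounded z M : 0 < z -> exists n : Z, (1 <= n)%Z /\ M < Rpower (IZR n) z.
Proof.
  intros Hz. destruct (archimed (exp (M / z))) as [Hn _]. pose proof (exp_pos (M / z)).
  exists (up (exp (M / z))). split.
  - assert (0 < IZR (up (exp (M / z)))) as Hpos by lra. apply lt_IZR in Hpos. lia.
  - unfold Rpower.
    assert (Hln : M / z < ln (IZR (up (exp (M / z))))).
    { rewrite <- (ln_exp (M / z)) at 1. apply ln_increasing; lra. }
    apply (Rmult_lt_compat_l z) in Hln; [|exact Hz].
    replace (z * (M / z)) with M in Hln by (field; lra).
    pose proof (exp_ineq1_le (z * ln (IZR (up (exp (M / z)))))). lra.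
Qed.

Lemma power_lower_bound_exponent_nonneg (d : Z -> R) C zeta : 0 < C -> (forall n, d n <= 1) ->
  (forall n : Z, n <> 0%Z -> C * Rpower (IZR (Z.abs n)) (- zeta) <= d n) -> 0 <= zeta.
Proof.
  intros HC Hd1 Hdn. apply Rnot_lt_le. intros Hneg.
  destruct (Rpower_unbounded (- zeta) (/ C) ltac:(lra)) as [n [Hn HM]].
  pose proof (Hdn n ltac:(lia)) as Hlow. rewrite Z.abs_eq in Hlow by lia.
  apply (Rmult_lt_compat_l C) in HM; [|exact HC]. rewrite Rinv_r in HM by lra.
  pose proof (Hd1 n). lra.
Qed.

Lemma Rpower_opp_antitone x y z : 0 < x <= y -> 0 <= z -> Rpower y (- z) <= Rpower x (- z).
Proof.
  intros Hxy Hz. rewrite !Rpower_Ropp. apply Rinv_le_contravar; [apply exp_pos|].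
  apply Rle_Rpower_l; assumption.
Qed.

Lemma t_s_ge (d : Z -> R) C zeta s : 0 < C -> 0 <= zeta -> (1 <= s)%Z ->
  (forall n : Z, n <> 0%Z -> C * Rpower (IZR (Z.abs n)) (- zeta) <= d n) ->
  C * Rpower 2 (- zeta) * Rpower (IZR s) (- zeta) <= t_s d s.
Proof.
  intros HC Hz Hs Hdn. pose proof (IZR_le 1 s Hs).
  rewrite Rmult_assoc, Rpower_mult_distr by lra.
  assert (Hlow : forall n, (1 <= n <= 2 * s)%Z -> C * Rpower (2 * IZR s) (- zeta) <= d n).
  { intros n Hn. eapply Rle_trans; [|apply Hdn; lia].
    apply Rmult_le_compat_l; [lra|]. apply Rpower_opp_antitone; [|exact Hz].
    rewrite Z.abs_eq by lia. rewrite <- mult_IZR. split; [apply IZR_lt | apply IZR_le]; lia. }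
  apply Rmin_glb; apply Hlow; lia.
Qed.

Lemma t_s_ratio_bounds (a d : Z -> R) C zeta delta M C0 s : 0 < C -> 0 <= zeta -> (1 <= s)%Z ->
  (forall n, d n <= 1) ->
  (forall n : Z, n <> 0%Z -> C * Rpower (IZR (Z.abs n)) (- zeta) <= d n) ->
  0 < C0 <= delta -> delta <= sup_norm a <= M ->
  0 < C * Rpower 2 (- zeta) * C0 / M * Rpower (IZR s) (- zeta) <= t_s d s * C0 / sup_norm a /\
  t_s d s * C0 / sup_norm a <= 1.
Proof.
  intros HC Hz Hs Hd1 Hdn HC0 Hnorm.
  pose proof (t_s_ge d C zeta s HC Hz Hs Hdn) as Hts.
  assert (Hts1 : t_s d s <= 1) by (eapply Rle_trans; [apply Rmin_l | apply Hd1]).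
  assert (Hk : 0 < C * Rpower 2 (- zeta) * Rpower (IZR s) (- zeta))
    by (apply Rmult_lt_0_compat; [apply Rmult_lt_0_compat|]; [lra | apply exp_pos | apply exp_pos]).
  replace (C * Rpower 2 (- zeta) * C0 / M * Rpower (IZR s) (- zeta))
    with (C * Rpower 2 (- zeta) * Rpower (IZR s) (- zeta) * C0 / M) by (field; lra).
  unfold Rdiv. split; [split|].
  - apply Rmult_lt_0_compat; [apply Rmult_lt_0_compat|apply Rinv_0_lt_compat]; lra.
  - apply (Rle_trans _ (t_s d s * C0 * / M)).
    + apply Rmult_le_compat_r; [left; apply Rinv_0_lt_compat; lra|].
      apply Rmult_le_compat_r; lra.
    + apply Rmult_le_compat_l; [nra|]. apply Rinv_le_contravar; lra.
  - apply (Rmult_le_reg_r (sup_norm a)); [lra|].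
    rewrite Rmult_assoc, Rinv_l by lra. nra.
Qed.

Lemma Rsup_is_lub E : (exists x, E x) -> bound E -> is_lub E (Rsup E).
Proof.
  intros Hne Hb. unfold Rsup. apply epsilon_spec.
  destruct (completeness E Hb Hne) as [m Hm]. eauto.
Qed.

Lemma Rsup_le E U : (exists x, E x) -> (forall y, E y -> y <= U) -> Rsup E <= U.
Proof. intros Hne Hub. apply (Rsup_is_lub E Hne); [exists U|]; exact Hub. Qed.

Lemma sup_norm_bounds (a : Z -> R) delta M : (forall n, delta <= a n) -> (forall n, a n <= M) ->
  delta <= sup_norm a <= M.
Proof.
  intros Hlow Hup.
  assert (Hne : exists y, exists n : Z, y = a n) by (exists (a 0%Z), 0%Z; reflexivity).
  split.
  - eapply Rle_trans; [apply (Hlow 0%Z)|]. apply (Rsup_is_lub _ Hne).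
    + exists M. intros y [n ->]. apply Hup.
    + exists 0%Z. reflexivity.
  - apply Rsup_le; [exact Hne|]. intros y [n ->]. apply Hup.
Qed.

Lemma sqrt_1_minus_le_exp x y : 0 <= y <= x -> x <= 1 -> sqrt (1 - x) <= exp (- (y / 2)).
Proof.
  intros Hy Hx.
  assert (sqrt (1 - x) <= 1 - x / 2).
  { rewrite <- (sqrt_pow2 (1 - x / 2)) by lra. apply sqrt_le_1_alt. nra. }
  pose proof (exp_ineq1_le (- (y / 2))). lra.
Qed.

Lemma A_s_le_exp r a d C0 s c y : 0 < c ->
  (forall T k, 0 < T <= 1 -> T <= Rabs k -> rhat_abs2 r k <= 1 - c * T ^ 2) ->
  0 < y <= t_s d s * C0 / sup_norm a -> t_s d s * C0 / sup_norm a <= 1 ->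
  A_s r a d C0 s <= exp (- (c * y ^ 2 / 32)).
Proof.
  intros Hc Hdecay Hy HT. unfold A_s. set (T := t_s d s * C0 / sup_norm a) in *.
  assert (HcT : c * T ^ 2 <= 1).
  { pose proof (Hdecay T T ltac:(lra) ltac:(rewrite Rabs_right; lra)).
    unfold rhat_abs2 in *. nra. }
  assert (Hsup : Rsup (fun y => exists k, T <= Rabs k /\ y = rhat_abs2 r k) <= 1 - c * T ^ 2).
  { apply Rsup_le.
    - exists (rhat_abs2 r T), T. split; [rewrite Rabs_right; lra | reflexivity].
    - intros z [k [Hk ->]]. apply Hdecay; lra. }
  eapply Rle_trans; [apply sqrt_le_1_alt; apply Rplus_le_compat_l, Rmult_le_compat_l, Hsup; lra|].
  replace (15 / 16 + 1 / 16 * (1 - c * T ^ 2)) with (1 - c * T ^ 2 / 16) by field.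
  replace (c * y ^ 2 / 32) with (c * y ^ 2 / 16 / 2) by field.
  apply sqrt_1_minus_le_exp; [|lra].
  assert (y ^ 2 <= T ^ 2) by (apply pow_incr; lra). nra.
Qed.

Theorem lemma4p9 (r : R -> R) (a d : Z -> R) (delta C zeta : R) :
  (* hypotheses on r *)
  (forall x, 0 <= r x) ->
  (exists B, forall x, r x <= B) ->
  (exists L, 0 <= L /\ forall x, L < Rabs x -> r x = 0) ->
  Rint_cs r 1 ->
  (* hypotheses on a *)
  (exists M, forall n, a n <= M) ->
  0 < delta -> (forall n, delta <= a n) ->
  (* hypotheses on d *)
  (forall n, 0 < d n <= 1) ->
  0 < C -> zeta < 1 / 2 ->
  (forall n : Z, n <> 0%Z -> C * Rpower (IZR (Z.abs n)) (- zeta) <= d n) ->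
  exists C0max, 0 < C0max /\
    forall C0, 0 < C0 < C0max ->
      exists gamma', 0 < gamma' /\
        forall s : Z, (1 <= s)%Z ->
          A_s r a d C0 s <= exp (- (gamma' * Rpower (IZR s) (- (2 * zeta)))).
Proof.
  intros Hr0 [B HB] _ [L [HL [Hvan HI]]] [M HM] Hdel Hda Hd HC _ Hdn.
  assert (Hd1 : forall n, d n <= 1) by apply Hd.
  pose proof (power_lower_bound_exponent_nonneg d C zeta HC Hd1 Hdn) as Hz.
  destruct (rhat_abs2_le_away_from_0 r L (Rmax B 1) Hr0
    (fun x => Rle_trans _ _ _ (HB x) (Rmax_l B 1)) (Rmax_r B 1) HL Hvan HI) as [c [Hc Hdecay]].
  pose proof (sup_norm_bounds a delta M Hda HM) as Hnorm.
  exists delta. split; [exact Hdel|]. intros C0 HC0.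
  set (kap := C * Rpower 2 (- zeta) * C0 / M).
  assert (Hkap : 0 < kap)
    by (apply Rdiv_lt_0_compat;
        [apply Rmult_lt_0_compat; [apply Rmult_lt_0_compat, exp_pos|]|]; lra).
  exists (c * kap ^ 2 / 32).
  split; [apply Rdiv_lt_0_compat; [apply Rmult_lt_0_compat, pow_lt|]; lra|].
  intros s Hs.
  destruct (t_s_ratio_bounds a d C zeta delta M C0 s HC Hz Hs Hd1 Hdn ltac:(lra) Hnorm)
    as [Hlow Hup].
  replace (c * kap ^ 2 / 32 * Rpower (IZR s) (- (2 * zeta)))
    with (c * (kap * Rpower (IZR s) (- zeta)) ^ 2 / 32)
    by (replace (- (2 * zeta)) with (- zeta + - zeta) by ring; rewrite Rpower_plus; field).
  apply (A_s_le_exp r a d C0 s c); assumption.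
Qed.
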